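(* Let $\alpha>0$, let $\mathcal{X}\subset\mathbb{R}^d$ be convex, and let $K$ be the conic hull of $\mathcal{X}$, assumed closed. Let $\mathcal{A}=\{y\in\mathbb{R}^d: x^Ty\le\|x\|\,\alpha\ \text{for all } x\in\mathcal{X}\}$ and $\mathcal{B}=\{y\in\mathbb{R}^d:\|p_K(y)\|\le\alpha\}$. Then $\mathcal{A}=\mathcal{B}$.
   Context: $\|\cdot\|$ is the Euclidean norm. The conic hull of a set is the smallest convex cone containing it. For a closed convex set $C\subset\mathbb{R}^d$ and $y\in\mathbb{R}^d$, the projection $p_C(y)$ is the unique point of $C$ with $\|p_C(y)-y\|=\inf_{x\in C}\|x-y\|$. *)

From HB Require Import structures.
From mathcomp Require Import all_boot all_order all_algebra.
From mathcomp Require Import all_classical all_reals all_analysis.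
Set Implicit Arguments. Unset Strict Implicit. Unset Printing Implicit Defensive.
Import Order.TTheory GRing.Theory Num.Theory.
Local Open Scope classical_set_scope.
Local Open Scope ring_scope.

(* R^d is modelled as row vectors 'rV[R]_d. *)
Definition dotv (R : realType) (d : nat) (u v : 'rV[R]_d) : R :=
  \sum_(i < d) u ord0 i * v ord0 i.

Definition enorm (R : realType) (d : nat) (u : 'rV[R]_d) : R :=
  Num.sqrt (dotv u u).

Definition is_cone (R : realType) (d : nat) (C : set 'rV[R]_d) : Prop :=
  forall x (t : R), 0 <= t -> C x -> C (t *: x).

Definition convex_cone (R : realType) (d : nat) (C : set 'rV[R]_d) : Prop :=
  is_cone C /\ convex_set C.

Definition conic_hull (R : realType) (d : nat) (X : set 'rV[R]_d) : set 'rV[R]_d :=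
  [set y | forall C : set 'rV[R]_d, convex_cone C -> X `<=` C -> C y].

Definition is_proj (R : realType) (d : nat) (C : set 'rV[R]_d) (y p : 'rV[R]_d) : Prop :=
  C p /\ forall x, C x -> enorm (p - y) <= enorm (x - y).

(* the projection p_C(y): the (unique, for C closed convex nonempty) nearest point *)
Definition proj_onto (R : realType) (d : nat) (C : set 'rV[R]_d) (y : 'rV[R]_d) : 'rV[R]_d :=
  xget 0 [set p | is_proj C y p].

(** Write [q := p_K(y)].  Minimality of [q] in the convex cone [K] means that
    moving from [q] in any direction [k] that stays in [K] cannot decrease the
    distance to [y]; taking [k] in [K] and [k = -q] gives
    [<q - y, k> >= 0] on [K] and [<q - y, q> <= 0].  Since [X] is convex, every
    point of [K] is a ray [t x] with [t >= 0] and [x] in [X], so [y] lies in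
    [A] iff [<k, y> <= alpha |k|] on [K].  For such [y],
    [|q|^2 <= <q, y> <= alpha |q|]; conversely, if [|q| <= alpha] then
    [<x, y> <= <x, q> <= |x| |q| <= alpha |x|] by Cauchy-Schwarz. *)

From HB Require Import structures.
From mathcomp Require Import all_boot all_order all_algebra.
From mathcomp Require Import all_classical all_reals all_analysis.
From mathcomp Require Import ring lra.
Set Implicit Arguments. Unset Strict Implicit. Unset Printing Implicit Defensive.
Import Order.TTheory GRing.Theory Num.Theory numFieldTopology.Exports.
Local Open Scope classical_set_scope.
Local Open Scope ring_scope.
Local Open Scope convex_scope.

Section dot_product.
Context {R : realType} {d : nat}.
Implicit Types (u v w : 'rV[R]_d).

Lemma dotvC u v : dotv u v = dotv v u.
Proof. by apply: eq_bigr => i _; rewrite mulrC. Qed.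

Lemma dotvDl u v w : dotv (u + v) w = dotv u w + dotv v w.
Proof. by rewrite /dotv -big_split; apply: eq_bigr => i _; rewrite mxE mulrDl. Qed.

Lemma dotvZl a u w : dotv (a *: u) w = a * dotv u w.
Proof. by rewrite /dotv mulr_sumr; apply: eq_bigr => i _; rewrite mxE mulrA. Qed.

Lemma dotvBl u v w : dotv (u - v) w = dotv u w - dotv v w.
Proof. by rewrite dotvDl -scaleN1r dotvZl mulN1r. Qed.

Lemma dotvDr u v w : dotv w (u + v) = dotv w u + dotv w v.
Proof. by rewrite dotvC dotvDl !(dotvC w). Qed.

Lemma dotvZr a u w : dotv w (a *: u) = a * dotv w u.
Proof. by rewrite dotvC dotvZl dotvC. Qed.

Lemma dotvBr u v w : dotv w (u - v) = dotv w u - dotv w v.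
Proof. by rewrite dotvC dotvBl !(dotvC w). Qed.

Lemma dotvvDZ u k s :
  dotv (u + s *: k) (u + s *: k) = dotv u u + 2 * s * dotv u k + s ^+ 2 * dotv k k.
Proof. by rewrite !(dotvDl, dotvDr, dotvZl, dotvZr) (dotvC k u); ring. Qed.

Lemma dotvv_ge0 u : 0 <= dotv u u.
Proof. by apply: sumr_ge0 => i _; rewrite -expr2 sqr_ge0. Qed.

Lemma dotvv_eq0 u : dotv u u = 0 -> u = 0.
Proof.
have sq_ge0 j : true -> 0 <= u ord0 j * u ord0 j by rewrite -expr2 sqr_ge0.
move=> /(psumr_eq0P sq_ge0) u0; apply/rowP => i; rewrite mxE.
by apply/eqP; rewrite -[_ == 0]orbb -mulf_eq0; apply/eqP; exact: u0.
Qed.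

Lemma enorm_ge0 u : 0 <= enorm u.
Proof. exact: sqrtr_ge0. Qed.

Lemma sqr_enorm u : enorm u ^+ 2 = dotv u u.
Proof. by rewrite sqr_sqrtr // dotvv_ge0. Qed.

Lemma enorm_eq0 u : enorm u = 0 -> u = 0.
Proof. by move=> u0; apply: dotvv_eq0; rewrite -sqr_enorm u0 expr0n. Qed.

Lemma enorm0 : enorm (0 : 'rV[R]_d) = 0.
Proof. by rewrite /enorm -(scale0r 0) dotvZl mul0r sqrtr0. Qed.

Lemma enormZ t u : enorm (t *: u) = `|t| * enorm u.
Proof. by rewrite /enorm dotvZl dotvZr mulrA -expr2 sqrtrM ?sqr_ge0 // sqrtr_sqr. Qed.

Lemma ler_enorm u v : (enorm u <= enorm v) = (dotv u u <= dotv v v).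
Proof. by rewrite ler_sqrt // dotvv_ge0. Qed.

(* Expanding [0 <= |b u - a v|^2] with [a = |u|], [b = |v|]. *)
Lemma cauchy_schwarz u v : dotv u v <= enorm u * enorm v.
Proof.
set a := enorm u; set b := enorm v.
have [ab0|ab_neq0] := eqVneq (a * b) 0.
  rewrite ab0; move: ab0 => /eqP; rewrite mulf_eq0 => /orP[] /eqP/enorm_eq0 ->.
    by rewrite -(scale0r 0) dotvZl mul0r.
  by rewrite -(scale0r 0) dotvZr mul0r.
have ab_gt0 : 0 < a * b by rewrite lt_def ab_neq0 mulr_ge0 ?enorm_ge0.
suff : 0 <= (a * b) * (a * b - dotv u v) by rewrite pmulr_rge0 // subr_ge0.
have := dotvv_ge0 (b *: u - a *: v).
rewrite !(dotvBl, dotvBr, dotvZl, dotvZr) -!sqr_enorm -/a -/b (dotvC v u).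
by nra.
Qed.

Lemma normr_le_enorm u : `|u| <= enorm u.
Proof.
rewrite [`|u|]mx_normrE; apply: bigmax_le => [|[i j] _]; first exact: enorm_ge0.
rewrite (ord1 i) -sqrtr_sqr ler_sqrt ?dotvv_ge0 // /dotv (bigD1 j) //= -expr2 lerDl.
by apply: sumr_ge0 => k _; rewrite -expr2 sqr_ge0.
Qed.

Lemma continuous_dotv_sub y : continuous (fun k : 'rV[R]_d => dotv (k - y) (k - y)).
Proof.
rewrite /dotv -fct_sumE; apply: (big_ind (fun f => continuous f)).
- exact: cst_continuous.
- by move=> f g fc gc k; exact: cvgD (fc k) (gc k).
move=> i _ k.
have cik : {for k, continuous (fun x : 'rV[R]_d => (x - y) ord0 i)}.
  have -> : (fun x : 'rV[R]_d => (x - y) ord0 i) = fun x => x ord0 i - y ord0 i.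
    by apply/funext => x; rewrite !mxE.
  by apply: cvgB; [exact: nbhs_filter | exact: coord_continuous | exact: cst_continuous].
by apply: cvgM; [exact: nbhs_filter | exact: cik | exact: cik].
Qed.

End dot_product.

Lemma convlmodE (R : numDomainType) (E : lmodType R) (x y : E) (l : {i01 R}) :
  (x : convex_lmodType E) <| l |> y = l%:num *: x + (1 - l%:num) *: y.
Proof. by []. Qed.

Section cones.
Context {R : realType} {d : nat}.
Implicit Types (X K : set 'rV[R]_d).

Lemma convex_coneD K a b : convex_cone K -> K a -> K b -> K (a + b).
Proof.
move=> [coneK cvxK] Ka Kb.
have half_ge0 : 0 <= 2^-1 :> R by rewrite invr_ge0.
have half_le1 : 2^-1 <= 1 :> R by rewrite invf_le1 ?ler1n.
set m := (a : convex_lmodType _) <| Itv01 half_ge0 half_le1 |> b.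
have Km : K m by have := cvxK a b (Itv01 half_ge0 half_le1); rewrite !in_setE; apply.
have -> : a + b = 2 *: m.
  rewrite /m convlmodE /= scalerDr !scalerA mulfV ?pnatr_eq0 // scale1r.
  by rewrite (_ : 2 * (1 - 2^-1) = 1 :> R) ?scale1r //; field.
exact: coneK.
Qed.

Lemma convex_cone_conic_hull X : convex_cone (conic_hull X).
Proof.
split=> [x t t_ge0 Kx C ccC XC|x y l]; first exact: ccC.1 (Kx C ccC XC).
rewrite !in_setE => Kx Ky C ccC XC.
by have := ccC.2 x y l; rewrite !in_setE; apply; [exact: Kx | exact: Ky].
Qed.

Lemma sub_conic_hull X : X `<=` conic_hull X.
Proof. by move=> x Xx C _; apply. Qed.

Definition rays X : set 'rV[R]_d :=
  [set k | exists2 t : R, 0 <= t & exists2 x, X x & t *: x = k].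

Lemma convex_cone_rays X : convex_set X -> convex_cone (rays X).
Proof.
move=> cvxX; split=> [k t t_ge0 [s s_ge0 [x Xx <-]]|a b l].
  by exists (t * s); [exact: mulr_ge0 | exists x; rewrite // scalerA].
rewrite !in_setE => -[t1 t1_ge0 [x1 X1 <-]] [t2 t2_ge0 [x2 X2 <-]].
rewrite convlmodE !scalerA; set L := l%:num.
have [L_ge0 L_le1] : 0 <= L /\ L <= 1 by rewrite /L; split; [apply: ge0 | apply: le1].
have p1 : 0 <= L * t1 by rewrite mulr_ge0.
have p2 : 0 <= (1 - L) * t2 by rewrite mulr_ge0 // subr_ge0.
set T := L * t1 + (1 - L) * t2.
have [T0|T_neq0] := eqVneq T 0.
  have [e1 e2] : L * t1 = 0 /\ (1 - L) * t2 = 0 by move: T0; rewrite /T; lra.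
  by exists 0 => //; exists x1 => //; rewrite e1 e2 !scale0r addr0.
have T_gt0 : 0 < T by rewrite lt_def T_neq0 addr_ge0.
(* the convex combination is [T] times the point of [X] with weight [L t1 / T] on [x1] *)
have w_ge0 : 0 <= L * t1 / T by rewrite divr_ge0 // ltW.
have w_le1 : L * t1 / T <= 1 by rewrite ler_pdivrMr // mul1r lerDl.
exists T; first exact: ltW.
exists ((x1 : convex_lmodType _) <| Itv01 w_ge0 w_le1 |> x2).
  by have := cvxX x1 x2 (Itv01 w_ge0 w_le1); rewrite !in_setE; apply.
rewrite convlmodE /= scalerDr !scalerA mulrBr mulr1 mulrCA mulfV // mulr1.
by congr (_ + _ *: _); rewrite /T addrAC subrr add0r.
Qed.

Lemma conic_hull_sub_rays X : convex_set X -> conic_hull X `<=` rays X.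
Proof.
move=> cvxX k; apply; first exact: convex_cone_rays.
by move=> x Xx; exists 1; [exact: ler01 | exists x; rewrite ?scale1r].
Qed.

End cones.

Section projection.
Context {R : realType} {d : nat}.
Implicit Types (K : set 'rV[R]_d) (y p : 'rV[R]_d).

Lemma exists_proj K y : closed K -> K !=set0 -> exists p, is_proj K y p.
Proof.
move=> clK [k0 Kk0].
pose g k := dotv (k - y) (k - y).
pose A := K `&` [set k | g k <= g k0].
have clA : closed A.
  apply: closedI => //; apply: (preimage_closed (D := [set z | z <= g k0])).
    by move=> x _; exact: continuous_dotv_sub.
  exact: closed_le.
have bdA : bounded_set A.
  exists (Num.sqrt (g k0) + `|y|); split=> [|M M_gt x [_ gx] /=]; first exact: num_real.
  apply: le_trans (ltW M_gt); rewrite -[x](subrK y); apply: le_trans (ler_normD _ _) _.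
  rewrite lerD2r; apply: le_trans (normr_le_enorm _) _.
  by rewrite /enorm ler_sqrt ?dotvv_ge0.
have [p Ap pmin] := EVT_min_rV (ex_intro _ k0 (conj Kk0 (lexx _)))
  (bounded_closed_compact bdA clA) (continuous_subspaceT (@continuous_dotv_sub _ _ y)).
move: Ap; rewrite in_setE => -[Kp gp]; exists p; split=> // x Kx.
rewrite ler_enorm; have [gx|gx] := leP (g x) (g k0); first by apply: pmin; rewrite in_setE.
exact: le_trans gp (ltW gx).
Qed.

Lemma proj_ontoP K y : closed K -> K !=set0 -> is_proj K y (proj_onto K y).
Proof. by move=> clK K0; apply: xgetPex; exact: exists_proj. Qed.

Lemma dotv_ge0_of_min (e k : 'rV[R]_d) :
  (forall s, 0 < s -> s <= 1 -> dotv e e <= dotv (e + s *: k) (e + s *: k)) ->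
  0 <= dotv e k.
Proof.
move=> emin; rewrite leNgt; apply/negP => a_lt0.
set a := dotv e k in a_lt0; have b_ge0 := dotvv_ge0 k; set b := dotv k k in b_ge0.
(* chosen so that [s b <= -a], which makes the slope [2 a + s b] negative *)
set s := - a / (b - a).
have s_gt0 : 0 < s by rewrite divr_gt0 //; lra.
have s_le1 : s <= 1 by rewrite ler_pdivrMr; lra.
have sb_le : s * b <= - a by rewrite /s mulrAC ler_pdivrMr; nra.
have := emin s s_gt0 s_le1; rewrite dotvvDZ -/a -/b => H.
have : 0 <= s * (2 * a + s * b) by move: H; rewrite mulrDr expr2; lra.
by rewrite pmulr_rge0 //; lra.
Qed.

Lemma is_proj_feasible_dir K y p k : is_proj K y p ->
  (forall s, 0 < s -> s <= 1 -> K (p + s *: k)) -> 0 <= dotv (p - y) k.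
Proof.
move=> [_ pmin] Kpk; apply: dotv_ge0_of_min => s s_gt0 s_le1.
by rewrite -ler_enorm addrAC; apply: pmin; exact: Kpk.
Qed.

Lemma proj_cone_dotv_ge0 K y p k : convex_cone K -> is_proj K y p -> K k ->
  0 <= dotv (p - y) k.
Proof.
move=> ccK projp Kk; apply: (is_proj_feasible_dir projp) => s s_gt0 _.
by apply: convex_coneD projp.1 _ => //; apply: ccK.1 => //; exact: ltW.
Qed.

Lemma proj_cone_dotv_le0 K y p : convex_cone K -> is_proj K y p -> dotv (p - y) p <= 0.
Proof.
move=> ccK projp; rewrite -oppr_ge0 -mulN1r -dotvZr scaleN1r.
apply: (is_proj_feasible_dir projp) => s _ s_le1.
rewrite scalerN -scaleNr -{1}(scale1r p) -scalerDl.
by apply: ccK.1 projp.1; rewrite subr_ge0.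
Qed.

End projection.

Section polar_ball.
Context {R : realType} {d : nat}.
Implicit Types (X K : set 'rV[R]_d) (y : 'rV[R]_d) (alpha : R).

Lemma rays_dotv_le X y alpha :
  (forall x, X x -> dotv x y <= enorm x * alpha) ->
  forall k, rays X k -> dotv k y <= enorm k * alpha.
Proof.
move=> Xy _ [t t_ge0 [x Xx <-]].
by rewrite dotvZl enormZ ger0_norm // -mulrA ler_wpM2l // Xy.
Qed.

Lemma enorm_proj_cone_le K y q alpha : convex_cone K -> is_proj K y q ->
  0 <= alpha -> (forall k, K k -> dotv k y <= enorm k * alpha) ->
  enorm q <= alpha.
Proof.
move=> ccK projq alpha_ge0 Ky.
have qq_le : dotv q q <= dotv q y.
  by have := proj_cone_dotv_le0 ccK projq; rewrite dotvBl (dotvC y); lra.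
have := le_trans qq_le (Ky q projq.1); rewrite -sqr_enorm.
by have := enorm_ge0 q; nra.
Qed.

Lemma dotv_le_enorm_proj_cone K y q x : convex_cone K -> is_proj K y q -> K x ->
  dotv x y <= enorm x * enorm q.
Proof.
move=> ccK projq Kx; apply: le_trans (cauchy_schwarz x q).
by have := proj_cone_dotv_ge0 ccK projq Kx; rewrite dotvBl (dotvC q) (dotvC y); lra.
Qed.

End polar_ball.

Theorem mainTheorem16 (R : realType) (d : nat) (alpha : R) (X : set 'rV[R]_d) :
  0 < alpha -> convex_set X -> closed (conic_hull X : set 'rV[R^o]_d) ->
  [set y : 'rV[R]_d | forall x, X x -> dotv x y <= enorm x * alpha]
  = [set y : 'rV[R]_d | enorm (proj_onto (conic_hull X) y) <= alpha].
Proof.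
move=> alpha_gt0 cvxX clK; set K := conic_hull X.
have ccK : convex_cone K := convex_cone_conic_hull X.
have KX : K `<=` rays X := conic_hull_sub_rays cvxX.
have [[x0 Xx0]|X0] := pselect (X !=set0); last first.
  (* then [p_K(y)] is the default value [0] of [xget] *)
  have -> : K = set0.
    by apply/seteqP; split=> // k /KX [t _ [x Xx _]]; apply: X0; exists x.
  apply/seteqP; split=> y _ /=; last by move=> x Xx; case: X0; exists x.
  by rewrite /proj_onto xgetPN ?enorm0 ?ltW // => p [].
have projK y : is_proj K y (proj_onto K y).
  by apply: proj_ontoP clK _; exists x0; exact: sub_conic_hull.
apply/seteqP; split=> y /= Xy.
  apply: enorm_proj_cone_le ccK (projK y) (ltW alpha_gt0) _ => k /KX.
  exact: rays_dotv_le.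
move=> x Xx; apply: le_trans (dotv_le_enorm_proj_cone ccK (projK y) (sub_conic_hull Xx)) _.
by rewrite ler_wpM2l ?enorm_ge0.
Qed.
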